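(* Let $n\ge1$, $G\le S_n$ and $\chi$ a character of $G$. The following are equivalent: (1) $d_\chi^G(A)=d_\chi^G(A^T)$ for every $A\in M_n(\mathbb C)$; (2) $d_\chi^G(AB)=d_\chi^G(BA)$ for all $A,B\in\mathbb S_n(\mathbb C)$; (3) $\chi$ is real valued.
   Context: A character of $G\le S_n$ is a function $g\mapsto\operatorname{tr}(\rho(g))$ for some homomorphism $\rho:G\to GL_m(\mathbb C)$, $m\ge1$. $\mathbb S_n(\mathbb C)$ is the set of complex symmetric $n\times n$ matrices. $d_\chi^G(A)=\sum_{\sigma\in G}\chi(\sigma)\prod_{i=1}^n A_{i\,\sigma(i)}$ for $A\in M_n(\mathbb C)$. *)

From HB Require Import structures.
From mathcomp Require Import all_boot all_order all_algebra all_fingroup all_solvable all_field all_character.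
Set Implicit Arguments. Unset Strict Implicit. Unset Printing Implicit Defensive.
Import Order.TTheory GRing.Theory Num.Theory.
Local Open Scope ring_scope.

Definition gen_mx_fun (C : numClosedFieldType) (n : nat) (G : {set 'S_n})
  (chi : 'S_n -> C) (A : 'M[C]_n) : C :=
  \sum_(s in G) chi s * \prod_(i < n) A i (s i).

Definition is_character (C : numClosedFieldType) (n : nat) (G : {group 'S_n})
  (chi : 'S_n -> C) : Prop :=
  exists m : nat, (0 < m)%N /\
    exists rG : mx_representation C G m, forall g, g \in G -> chi g = \tr (rG g).

(* Write [d] for [gen_mx_fun G chi].  Evaluating [d] at a permutation matrix
   [perm_mx w] picks out [chi w], and transposing corresponds to [w |-> w^-1];
   hence (1) says exactly that [chi] is invariant under inversion on [G].
   For a character, [chi g^-1] is the complex conjugate of [chi g], because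
   the representing matrix has finite order, is therefore diagonalizable with
   eigenvalues on the unit circle; so (1) is equivalent to (3).  (1) implies (2)
   since [(A B)^T = B A] for symmetric [A], [B].  Conversely, every permutation
   is a product [u v] of two involutions (reflect each of its cycles twice), so
   that [perm_mx u], [perm_mx v] are symmetric, and (2) applied to them gives
   [chi (u v) = chi (v u) = chi (u v)^-1]. *)

From HB Require Import structures.
From mathcomp Require Import all_boot all_order all_algebra all_fingroup all_solvable all_field all_character.
From mathcomp Require Import zify.
Set Implicit Arguments. Unset Strict Implicit. Unset Printing Implicit Defensive.
Import Order.TTheory GRing.Theory Num.Theory.
Local Open Scope ring_scope.

Lemma reflection_exponent_mod k a b j : (0 < k)%N ->
  (a + k.-1 * (b + k.-1 * j) + b = j + a %[mod k])%N.
Proof.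
case: k => [|[|k]] // _; first by rewrite !modn1.
have -> : (a + k.+1 * (b + k.+1 * j) + b = (b + k * j) * k.+2 + (j + a))%N by nia.
by rewrite modnMDl.
Qed.

Section PermAsProductOfInvolutions.
Local Open Scope group_scope.
Variables (T : finType) (t : {perm T}).

Let fconnect_sym_perm : connect_sym (frel t).
Proof. exact: fconnect_sym perm_inj. Qed.

Lemma froot_permX e x : froot t ((t ^+ e) x) = froot t x.
Proof.
apply/esym/(fingraph.rootP fconnect_sym_perm).
by rewrite permX fconnect_iter.
Qed.

Lemma permX_mod_order e x : (t ^+ e) x = (t ^+ (e %% fingraph.order t x)) x.
Proof.
rewrite {1}(divn_eq e (fingraph.order t x)) expgD permM !permX; congr iter.
by elim: (e %/ _)%N => // q IHq; rewrite mulSn iterD IHq (iter_order perm_inj).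
Qed.

(* On the cycle of [t] through its root [r], this maps [t^j r] to [t^(a-j) r]:
   [k.-1 * j] represents [-j] modulo the cycle length [k]. *)
Definition cycle_reflection (a : nat) x :=
  let r := froot t x in (t ^+ (a + (fingraph.order t r).-1 * findex t r x)) r.

Lemma cycle_reflection_permX a e r : froot t r = r ->
  cycle_reflection a ((t ^+ e) r) = (t ^+ (a + (fingraph.order t r).-1 * e)) r.
Proof.
move=> rootr; rewrite /cycle_reflection froot_permX rootr.
rewrite [in findex _ _ _]permX_mod_order [in findex _ _ _]permX findex_iter; last first.
  by rewrite ltn_pmod // fingraph.order_gt0.
rewrite permX_mod_order [RHS]permX_mod_order; congr ((t ^+ _) r).
by rewrite -modnDmr modnMmr modnDmr.
Qed.

Lemma permX_cycle_reflectionK a b x :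
  (t ^+ b) (cycle_reflection a (cycle_reflection b x)) = (t ^+ a) x.
Proof.
have [j [r -> rootr]] : exists j, exists2 r, x = (t ^+ j) r & froot t r = r.
  exists (findex t (froot t x) x), (froot t x); last exact: root_root.
  by rewrite permX iter_findex // fconnect_sym_perm connect_root.
rewrite !cycle_reflection_permX // -!permM -!expgD.
rewrite permX_mod_order [RHS]permX_mod_order; congr ((t ^+ _) r).
by apply: reflection_exponent_mod; rewrite fingraph.order_gt0.
Qed.

Lemma cycle_reflection_involutive a : involutive (cycle_reflection a).
Proof. by move=> x; apply: (@perm_inj _ (t ^+ a)); rewrite permX_cycle_reflectionK. Qed.

Lemma cycle_reflection1_0 x : cycle_reflection 1 (cycle_reflection 0 x) = t x.
Proof. by have := permX_cycle_reflectionK 1 0 x; rewrite expg0 perm1 expg1. Qed.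

Lemma invg_perm_involutive (f : T -> T) (fK : involutive f) :
  (perm (can_inj fK))^-1 = perm (can_inj fK).
Proof.
by apply/eqP; rewrite eq_invg_mul; apply/eqP/permP => x; rewrite permM !permE fK.
Qed.

Lemma perm_mul_involutions :
  exists u v : {perm T}, [/\ u^-1 = u, v^-1 = v & t = u * v].
Proof.
exists (perm (can_inj (cycle_reflection_involutive 0))),
       (perm (can_inj (cycle_reflection_involutive 1))).
split; rewrite ?invg_perm_involutive //.
by apply/permP => x; rewrite permM !permE cycle_reflection1_0.
Qed.

End PermAsProductOfInvolutions.

Lemma conjmx_diag_expr (F : fieldType) m (P M : 'M[F]_m.+1) d k :
  P \in unitmx -> conjmx P M = diag_mx d ->
  conjmx P (M ^+ k) = diag_mx (\row_j d 0 j ^+ k).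
Proof.
move=> Pu PMd; have -> : M ^+ k = horner_mx M 'X^k by rewrite rmorphXn /= horner_mx_X.
rewrite -horner_mx_conj ?row_free_unit ?stablemx_unit // PMd horner_mx_diag.
by congr diag_mx; apply/matrixP => i j; rewrite !mxE hornerXn ord1.
Qed.

Lemma mxtrace_conjmx (F : fieldType) n (P A : 'M[F]_n) :
  P \in unitmx -> \tr (conjmx P A) = \tr A.
Proof. by move=> Pu; rewrite conjumx // mxtrace_mulC mulmxA mulVmx // mul1mx. Qed.

Section FiniteOrderTrace.
Variable C : numClosedFieldType.

Lemma conjC_unity_root (z : C) N : (0 < N)%N -> z ^+ N = 1 -> z^* = z ^+ N.-1.
Proof.
move=> N_gt0 zN1; have z_neq0 : z != 0.
  by apply: contraPneq zN1 => ->; rewrite expr0n gtn_eqF // => /esym/eqP; rewrite oner_eq0.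
have normz1 : `|z| = 1.
  by apply/eqP; rewrite -(pexpr_eq1 N_gt0) ?normr_ge0 // -normrX zN1 normr1.
apply: (mulfI z_neq0); rewrite -normCK normz1 expr1n -exprS prednK //.
Qed.

Lemma diagonalizable_finite_order m (M : 'M[C]_m.+1) N :
  (0 < N)%N -> M ^+ N = 1 -> diagonalizable M.
Proof.
move=> N_gt0 MN1; have [r XN1E] := closed_field_poly_normal ('X^N - 1 : {poly C}).
rewrite (monicP (monicXnsubC 1 N_gt0)) scale1r in XN1E.
apply/diagonalizableP; exists r.
  by rewrite -separable_prod_XsubC -XN1E separable_Xn_sub_1 // pnatr_eq0 -lt0n.
rewrite -XN1E; apply: mxminpoly_min.
by rewrite rmorphB rmorphXn /= horner_mx_X rmorph1 MN1 subrr.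
Qed.

Lemma mxtrace_finite_order_expr m (M : 'M[C]_m.+1) N :
  (0 < N)%N -> M ^+ N = 1 -> \tr (M ^+ N.-1) = (\tr M)^*.
Proof.
move=> N_gt0 MN1.
have [P Pu /diagonalizable_forPex[d /eqP PMd]] := diagonalizable_finite_order N_gt0 MN1.
have trX k : \tr (M ^+ k) = \sum_j d 0 j ^+ k.
  rewrite -(mxtrace_conjmx _ Pu) (conjmx_diag_expr _ Pu PMd) mxtrace_diag.
  by apply: eq_bigr => j _; rewrite mxE.
have dN1 j : d 0 j ^+ N = 1.
  have := conjmx_diag_expr N Pu PMd.
  rewrite MN1 conjmx_scalar ?row_free_unit // => /matrixP/(_ j j).
  by rewrite !mxE eqxx.
rewrite -[M]expr1 !trX rmorph_sum; apply: eq_bigr => j _.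
by rewrite expr1 -(conjC_unity_root N_gt0 (dN1 j)).
Qed.

Lemma mx_repr_trace_invg (gT : finGroupType) (G : {group gT}) m
    (rG : mx_representation C G m.+1) :
  {in G, forall g, \tr (rG g^-1%g) = (\tr (rG g))^*}.
Proof.
move=> g Gg; rewrite invg_expg repr_mxX // mxtrace_finite_order_expr //.
by rewrite -repr_mxX // expg_order repr_mx1.
Qed.

End FiniteOrderTrace.

Lemma prod_perm_mx (R : comPzRingType) n (s w : 'S_n) :
  \prod_i (perm_mx w : 'M[R]_n) i (s i) = (s == w)%:R.
Proof.
have [->|neq_sw] := eqVneq s w.
  by rewrite big1 // => i _; rewrite !mxE eqxx.
have [i neq_si] : exists i, s i != w i.
  apply/existsP; apply: contraNT neq_sw => /existsPn eq_sw.
  by apply/eqP/permP => i; apply/eqP/negPn/eq_sw.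
by rewrite (bigD1 i) //= !mxE eq_sym (negbTE neq_si) mul0r.
Qed.

Section GeneralizedMatrixFunction.
Variables (C : numClosedFieldType) (n : nat) (G : {group 'S_n}) (chi : 'S_n -> C).

Lemma gen_mx_fun_perm_mx w :
  gen_mx_fun G chi (perm_mx w) = if w \in G then chi w else 0.
Proof.
rewrite /gen_mx_fun; under eq_bigr do rewrite prod_perm_mx.
case: ifP => Gw.
  rewrite (bigD1 w) //= eqxx mulr1 big1 ?addr0 // => s /andP[_ /negbTE->].
  exact: mulr0.
rewrite big1 // => s Gs; case: eqVneq => [eq_sw | _]; last exact: mulr0.
by rewrite -eq_sw Gs in Gw.
Qed.

Lemma gen_mx_fun_tr A :
  gen_mx_fun G chi A^T = \sum_(s in G) chi s^-1%g * \prod_i A i (s i).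
Proof.
rewrite /gen_mx_fun (reindex_inj invg_inj) /=.
apply: eq_big => [s | s _]; first by rewrite groupV.
congr (_ * _); rewrite (reindex_inj (@perm_inj _ s)) /=.
by apply: eq_bigr => i _; rewrite mxE permK.
Qed.

Lemma gen_mx_fun_trP :
  (forall A, gen_mx_fun G chi A = gen_mx_fun G chi A^T) <->
  {in G, forall g, chi g^-1%g = chi g}.
Proof.
split=> [trK g Gg | chiV A].
  by have := trK (perm_mx g); rewrite tr_perm_mx !gen_mx_fun_perm_mx groupV Gg.
by rewrite gen_mx_fun_tr; apply: eq_bigr => s Gs; rewrite chiV.
Qed.

Lemma gen_mx_fun_sym_mulC :
  (forall A, gen_mx_fun G chi A = gen_mx_fun G chi A^T) ->
  forall A B : 'M[C]_n, A^T = A -> B^T = B ->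
    gen_mx_fun G chi (A *m B) = gen_mx_fun G chi (B *m A).
Proof. by move=> trK A B symA symB; rewrite trK trmx_mul symA symB. Qed.

Lemma gen_mx_fun_sym_mulC_invg :
  (forall A B : 'M[C]_n, A^T = A -> B^T = B ->
     gen_mx_fun G chi (A *m B) = gen_mx_fun G chi (B *m A)) ->
  {in G, forall g, chi g^-1%g = chi g}.
Proof.
move=> symC g Gg; have [u [v [uV vV guv]]] := perm_mul_involutions g.
have vuE : (v * u = g^-1)%g by rewrite guv invMg uV vV.
have := symC (perm_mx u) (perm_mx v); rewrite !tr_perm_mx uV vV -!perm_mxM -guv vuE.
by rewrite !gen_mx_fun_perm_mx groupV Gg => ->.
Qed.

End GeneralizedMatrixFunction.

Theorem mainTheorem11 (C : numClosedFieldType) (n : nat) (n_gt0 : (0 < n)%N)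
  (G : {group 'S_n}) (chi : 'S_n -> C) (Hchi : is_character G chi) :
  [/\ ((forall A : 'M[C]_n, gen_mx_fun G chi A = gen_mx_fun G chi A^T) <->
       (forall A B : 'M[C]_n, A^T = A -> B^T = B ->
          gen_mx_fun G chi (A *m B) = gen_mx_fun G chi (B *m A))),
      ((forall A B : 'M[C]_n, A^T = A -> B^T = B ->
          gen_mx_fun G chi (A *m B) = gen_mx_fun G chi (B *m A)) <->
       (forall g, g \in G -> chi g \is Num.real)) &
      ((forall g, g \in G -> chi g \is Num.real) <->
       (forall A : 'M[C]_n, gen_mx_fun G chi A = gen_mx_fun G chi A^T))].
Proof.
have chiV : {in G, forall g, chi g^-1%g = (chi g)^*}.
  case: Hchi => -[|m] [// _ [rG chiE]] g Gg.
  by rewrite !chiE ?groupV // mx_repr_trace_invg.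
have realP : (forall g, g \in G -> chi g \is Num.real) <->
             {in G, forall g, chi g^-1%g = chi g}.
  split=> chiR g Gg; first by rewrite chiV //; apply/eqP; rewrite -CrealE chiR.
  by rewrite CrealE -chiV // chiR.
have trP := gen_mx_fun_trP G chi.
split; split.
- exact: gen_mx_fun_sym_mulC.
- by move=> /gen_mx_fun_sym_mulC_invg/trP.
- by move=> /gen_mx_fun_sym_mulC_invg/realP.
- by move=> /realP/trP/gen_mx_fun_sym_mulC.
- by move=> /realP/trP.
- by move=> /trP/realP.
Qed.
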